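(* Assume $\chi=\chi_1\chi_2^{-1}$ is weakly generic. Let $\sigma=\sigma_{a,b}\in W^{\exp}(\chi_1\oplus\chi_2)$ be such that $\mathcal{S}(\chi_1,\chi_2,\sigma)$ is non-empty, and let $(J,x)$ be its unique maximal element. Define $c_\tau=n_\tau+e-1-2x_\tau$ for $\tau\in\Sigma$ (so $c_\tau\in[1,p-1]$) and $r=r(J,c)$. Then $a_\tau-b_\tau+1=r_\tau$ for all $\tau$, except in the following two cases: (i) $J=\Sigma$, $n_\tau=e$ and $x_\tau=e-1$ for all $\tau$; (ii) $J=\varnothing$, $n_\tau=p-1-e$ and $x_\tau=0$ for all $\tau$. In cases (i) and (ii) there is the additional possibility that $a_\tau-b_\tau+1=p$ for all $\tau$ (and otherwise $a_\tau-b_\tau+1=r_\tau$ for all $\tau$). Furthermore, $r(J,c)$ is independent of the choice of $\tau_0$ in its definition.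
   Context: Let $p$ be a prime and $K/\mathbf{Q}_p$ finite with residue field $k$, residue degree $f$ and ramification index $e$; $I_K$ is the inertia subgroup of $G_K$. Fix a uniformiser $\pi$ and $\varpi\in\overline{K}$ with $\varpi^{p^f-1}=\pi$; $\omega\colon G_K\to k^\times$ sends $g$ to the reduction of $g(\varpi)/\varpi$. Let $\Sigma=\mathrm{Hom}_{\mathbf{F}_p}(k,\overline{\mathbf{F}}_p)$, $\varphi(x)=x^p$ on $k$, $\omega_\tau=\tau\circ\omega$. For $a\in\mathbf{Z}^\Sigma$, $\Omega_{\tau,a}=\sum_{i=0}^{f-1}p^ia_{\tau\circ\varphi^i}$. $\chi_1,\chi_2\colon G_K\to\overline{\mathbf{F}}_p^\times$ are continuous characters, $\chi=\chi_1\chi_2^{-1}=\psi\prod_\tau\omega_\tau^{n_\tau}$ with $\psi$ unramified, $n_\tau\in[1,p]$, some $n_\tau<p$ (this determines $n$). Weakly generic: $n_\tau\in[e,p-e]$ for all $\tau$. Serre weight $\sigma_{a,b}=\bigotimes_\tau(\det^{b_\tau}\otimes\mathrm{Sym}^{a_\tau-b_\tau}k^2)\otimes_{k,\tau}\overline{\mathbf{F}}_p$ for $a,b\in\mathbf{Z}^\Sigma$ with $a_\tau-b_\tau\in[0,p-1]$; $\sigma_{a,b}\cong\sigma_{a',b'}$ iff $a-b=a'-b'$ and $\Omega_{\tau,b}\equiv\Omega_{\tau,b'}\pmod{p^f-1}$. $W^{\exp}(\chi_1\oplus\chi_2)$: $\sigma_{a,b}$ belongs to it iff there exist $J\subseteq\Sigma$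 and $x_\tau\in[0,e-1]$ with $(\chi_1\oplus\chi_2)|_{I_K}\cong\prod_{\tau\in J}\omega_\tau^{a_\tau+1+x_\tau}\prod_{\tau\notin J}\omega_\tau^{b_\tau+x_\tau}\oplus\prod_{\tau\notin J}\omega_\tau^{a_\tau+e-x_\tau}\prod_{\tau\in J}\omega_\tau^{b_\tau+e-1-x_\tau}$. $\mathcal{S}(\chi_1,\chi_2,\sigma)$: pairs $(J,x)$, $J\subseteq\Sigma$, $x_\tau\in[0,e-1]$, with $\chi_1|_{I_K}=\prod_{\tau\in J}\omega_\tau^{a_\tau+1+x_\tau}\prod_{\tau\notin J}\omega_\tau^{b_\tau+x_\tau}$ and $\chi_2|_{I_K}=\prod_{\tau\notin J}\omega_\tau^{a_\tau+e-x_\tau}\prod_{\tau\in J}\omega_\tau^{b_\tau+e-1-x_\tau}$. With $s(J,x)_\tau=a_\tau-b_\tau+1+x_\tau$ ($\tau\in J$), $=x_\tau$ ($\tau\notin J$), order by $(J,x)\preceq(J',x')$ iff $\Omega_{\tau,s(J',x')-s(J,x)}\in(p^f-1)\mathbf{Z}_{\ge0}$ for all $\tau$; a non-empty $\mathcal{S}$ has a unique maximal element. $\delta_J$ and $r(J,c)$: for $(x,\tau)\in\mathbf{Z}^\Sigma\times\Sigma$, $y=\delta_J(x,\tau)$ equals $x$ if $1\le x_\tau\le p$; if $x_\tau\le0$ (resp. $x_\tau>p$) then $y_\tau=x_\tau+p$ (resp. $x_\tau-p$), $y_{\tau\circ\varphi}=x_{\tau\circ\varphi}-1$ if $\tau\circ\varphi\notin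 J$ and $x_{\tau\circ\varphi}+1$ if $\tau\circ\varphi\in J$, other entries unchanged. For $c_\tau\in[1,p-1]$ let $y_{0,\tau}=c_\tau$, $c_\tau+1$, $p-c_\tau$, $p-1-c_\tau$ according as ($\tau\in J,\tau\circ\varphi^{-1}\in J$), ($\tau\in J,\tau\circ\varphi^{-1}\notin J$), ($\tau\notin J,\tau\circ\varphi^{-1}\in J$), ($\tau\notin J,\tau\circ\varphi^{-1}\notin J$). If all $y_{0,\tau}>0$, $r(J,c)=y_0$; otherwise choose $\tau_0$ with $y_{0,\tau_0}=0$, put $y_\kappa=\delta_J(y_{\kappa-1},\tau_0\circ\varphi^{\kappa-1})$ for $\kappa=1,\dots,f$, and $r(J,c)=y_f$. *)

From HB Require Import structures.
From mathcomp Require Import all_boot all_order all_algebra.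
Set Implicit Arguments. Unset Strict Implicit. Unset Printing Implicit Defensive.
Import Order.TTheory GRing.Theory Num.Theory.
Local Open Scope ring_scope.

(* Sigma = Hom(k, Fpbar) is parametrised by 'I_f : index i stands for
   tau_i := tau0 \o phi^i.  Then tau_i \o phi = tau_{i+1 mod f} (ordS),
   tau_i \o phi^{-1} = tau_{i-1 mod f} (ord_pred). *)

Definition phi_shift (f : nat) (i : nat) (t : 'I_f) : 'I_f := iter i (@ordS f) t.

Definition Omega (p f : nat) (a : 'I_f -> int) (t : 'I_f) : int :=
  \sum_(i < f) (p ^ i)%N%:Z * a (phi_shift i t).

(* omega_{tau_i}(g) = tau0 \o phi^i (omega g) *)
Definition omega_tau (k L : fieldType) (tau0 : {rmorphism k -> L}) (p f : nat)
  (G : Type) (om : G -> k) (i : 'I_f) (g : G) : L :=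
  tau0 (om g ^+ (p ^ i)%N).

Definition omprod (k L : fieldType) (tau0 : {rmorphism k -> L}) (p f : nat)
  (G : Type) (om : G -> k) (A : {set 'I_f}) (m : 'I_f -> int) (g : G) : L :=
  \prod_(i in A) (omega_tau tau0 p om i g) ^ (m i).

(* continuous character G -> Fpbar^x (G abstract) *)
Definition is_char (L : fieldType) (G : Type) (mulG : G -> G -> G) (chi : G -> L) :=
  (forall g, chi g != 0) /\ (forall g h, chi (mulG g h) = chi g * chi h).

Definition diag2 (L : fieldType) (G : Type) (al be : G -> L) (g : G) : 'M[L]_2 :=
  diag_mx (\row_(i < 2) (if i == ord0 then al g else be g)).

Definition rep_iso (L : fieldType) (G : Type) (I : G -> Prop) (r1 r2 : G -> 'M[L]_2) :=
  exists2 P : 'M[L]_2, P \in unitmx & forall g, I g -> P *m r1 g = r2 g *m P.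

Definition ch1 (k L : fieldType) (tau0 : {rmorphism k -> L}) (p f : nat)
  (G : Type) (om : G -> k) (a b : 'I_f -> int) (J : {set 'I_f}) (x : 'I_f -> int) (g : G) : L :=
  omprod tau0 p om J (fun t => a t + 1 + x t) g * omprod tau0 p om (~: J) (fun t => b t + x t) g.

Definition ch2 (k L : fieldType) (tau0 : {rmorphism k -> L}) (p f e : nat)
  (G : Type) (om : G -> k) (a b : 'I_f -> int) (J : {set 'I_f}) (x : 'I_f -> int) (g : G) : L :=
  omprod tau0 p om (~: J) (fun t => a t + e%:Z - x t) g
  * omprod tau0 p om J (fun t => b t + e%:Z - 1 - x t) g.

Definition x_ok (f e : nat) (x : 'I_f -> int) := forall t, 0 <= x t <= e%:Z - 1.

Definition in_Wexp (k L : fieldType) (tau0 : {rmorphism k -> L}) (p f e : nat)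
  (G : Type) (I : G -> Prop) (om : G -> k) (chi1 chi2 : G -> L) (a b : 'I_f -> int) :=
  exists J : {set 'I_f}, exists x : 'I_f -> int, x_ok e x /\
    rep_iso I (diag2 chi1 chi2) (diag2 (ch1 tau0 p om a b J x) (ch2 tau0 p e om a b J x)).

Definition in_S (k L : fieldType) (tau0 : {rmorphism k -> L}) (p f e : nat)
  (G : Type) (I : G -> Prop) (om : G -> k) (chi1 chi2 : G -> L) (a b : 'I_f -> int)
  (J : {set 'I_f}) (x : 'I_f -> int) :=
  x_ok e x /\
  (forall g, I g -> chi1 g = ch1 tau0 p om a b J x g) /\
  (forall g, I g -> chi2 g = ch2 tau0 p e om a b J x g).

Definition sJx (f : nat) (a b : 'I_f -> int) (J : {set 'I_f}) (x : 'I_f -> int) (t : 'I_f) : int :=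
  if t \in J then a t - b t + 1 + x t else x t.

Definition leS (p f : nat) (a b : 'I_f -> int) (J : {set 'I_f}) (x : 'I_f -> int)
  (J' : {set 'I_f}) (x' : 'I_f -> int) :=
  forall t, 0 <= Omega p (fun u => sJx a b J' x' u - sJx a b J x u) t /\
            ((p ^ f - 1)%N%:Z %| Omega p (fun u => sJx a b J' x' u - sJx a b J x u) t)%Z.

Definition maxS (f : nat) (P : {set 'I_f} -> ('I_f -> int) -> Prop)
  (le : {set 'I_f} -> ('I_f -> int) -> {set 'I_f} -> ('I_f -> int) -> Prop)
  (J : {set 'I_f}) (x : 'I_f -> int) :=
  P J x /\ forall J' x', P J' x' -> le J x J' x' -> J' = J /\ (forall t, x' t = x t).

Definition unique_maxS (f : nat) (P : {set 'I_f} -> ('I_f -> int) -> Prop)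
  (le : {set 'I_f} -> ('I_f -> int) -> {set 'I_f} -> ('I_f -> int) -> Prop)
  (J : {set 'I_f}) (x : 'I_f -> int) :=
  maxS P le J x /\
  forall J' x', maxS P le J' x' -> J' = J /\ (forall t, x' t = x t).

Definition y0 (p f : nat) (J : {set 'I_f}) (c : 'I_f -> int) (t : 'I_f) : int :=
  if t \in J then (if ord_pred t \in J then c t else c t + 1)
  else (if ord_pred t \in J then p%:Z - c t else p%:Z - 1 - c t).

(* delta_J(y, t); when f = 1 (t \o phi = t) both modifications are added *)
Definition deltaJ (p f : nat) (J : {set 'I_f}) (y : 'I_f -> int) (t : 'I_f) : 'I_f -> int :=
  fun u =>
    if (1 <= y t) && (y t <= p%:Z) then y u
    else y u + (if u == t then (if y t <= 0 then p%:Z else - p%:Z) else 0)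
             + (if u == ordS t then (if ordS t \in J then 1 else -1) else 0).

Fixpoint ysteps (p f : nat) (J : {set 'I_f}) (c : 'I_f -> int) (t0 : 'I_f) (kap : nat)
  : 'I_f -> int :=
  match kap with
  | 0%N => y0 p J c
  | kap'.+1 => deltaJ p J (ysteps p J c t0 kap') (phi_shift kap' t0)
  end.

Definition rJc (p f : nat) (J : {set 'I_f}) (c : 'I_f -> int) (t0 : 'I_f) : 'I_f -> int :=
  if [forall t, 0 < y0 p J c t] then y0 p J c else ysteps p J c t0 f.

Definition t0_ok (p f : nat) (J : {set 'I_f}) (c : 'I_f -> int) (t0 : 'I_f) :=
  (forall t, 0 < y0 p J c t) \/ y0 p J c t0 = 0.

From HB Require Import structures.
From mathcomp Require Import all_boot all_order all_algebra cyclic finfield.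
From mathcomp Require Import zify ring lra.
Import Order.TTheory GRing.Theory Num.Theory.
Local Open Scope ring_scope.
Set Implicit Arguments. Unset Strict Implicit. Unset Printing Implicit Defensive.

(* Both w := a - b + 1 and r := r(J, c) have entries in [1, p] and solve the
   congruence  sum_i p^i (eps_i v_i - c_i) = 0  mod p^f - 1,  eps_i = +-1 as
   tau_i is in J or not: for w this is the identity chi1/chi2 = psi omega^n
   evaluated on a generator of the inertia image, for r it holds for y_0 and is
   preserved by every carry step delta_J.  The difference eps (w - r) is then
   the digit vector of a multiple of p^f - 1 with digits in [-(p-1), p-1], so
   it is 0 or constant +-(p-1): either w = r, or w and r are "antipodal" (one
   equals p where the other equals 1, according to J).  Off J, y_0 < p, and
   the carries never leave p at both tau_0 and tau_0 phi^-1 (both off J); so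
   if r is p off J, then J = Sigma and r = y_0 = c = 1: case (i).  If w is
   p off J, maximality of (J, x) forces J = {} (otherwise moving a boundary
   index into J gives a larger element of S); then r = 1 gives y_0 = p-1-c = 1,
   i.e. case (ii), unless p = 2, where (Sigma, x) would be larger.  Comparing
   two choices of tau_0 in the same way shows that r(J, c) does not depend on
   the choice. *)

Definition Omega0 (p : nat) {f : nat} (m : 'I_f -> int) : int :=
  \sum_(i < f) (p ^ i)%N%:Z * m i.

Definition pf1 (p f : nat) : int := (p ^ f)%N%:Z - 1.

Section Digits.

Variables (p f : nat).

Lemma Omega0_ext (m1 m2 : 'I_f -> int) : m1 =1 m2 -> Omega0 p m1 = Omega0 p m2.
Proof. by move=> h; apply: eq_bigr => i _; rewrite h. Qed.

Lemma Omega0B (m1 m2 : 'I_f -> int) :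
  Omega0 p (fun i => m1 i - m2 i) = Omega0 p m1 - Omega0 p m2.
Proof. by rewrite /Omega0 -sumrB; apply: eq_bigr => i _; rewrite mulrBr. Qed.

Lemma Omega0Z (a : int) (m : 'I_f -> int) : Omega0 p (fun i => a * m i) = a * Omega0 p m.
Proof. by rewrite /Omega0 mulr_sumr; apply: eq_bigr => i _; rewrite mulrCA. Qed.

Lemma Omega0_max_digit : Omega0 p (fun _ : 'I_f => p%:Z - 1) = pf1 p f.
Proof.
rewrite /Omega0 /pf1; elim: f => [|g IH]; first by rewrite big_ord0 expn0.
by rewrite big_ord_recr /= IH expnS PoszM; ring.
Qed.

(* Multiplication by p rotates the base-p digits modulo p^f - 1. *)
Lemma Omega0_pred_rot (m : 'I_f -> int) :
  (pf1 p f %| Omega0 p (fun i => m (ord_pred i)) - p%:Z * Omega0 p m)%Z.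
Proof.
rewrite /Omega0 (reindex_inj (@ordS_inj f)) /= mulr_sumr -sumrB.
apply: rpred_sum => j _; rewrite ordSK mulrA -mulrBl; apply: dvdz_mulr.
rewrite /pf1 /=; have := ltn_ord j; case: (ltngtP j.+1 f) => [jf _|//|jf _].
- by rewrite modn_small // expnS PoszM subrr dvdz0.
- rewrite jf modnn expn0 -PoszM -expnS jf.
  by apply/dvdzP; exists (-1); rewrite mulN1r opprB.
Qed.

Lemma Omega0_ge0_eq0 (m : 'I_f -> int) : (0 < p)%N ->
  (forall i, 0 <= m i) -> Omega0 p m = 0 -> m =1 (fun=> 0).
Proof.
move=> hp hm h0 i; have hpi : 0 < (p ^ i)%N%:Z by rewrite ltz_nat expn_gt0 hp.
have hnn (j : 'I_f) : true -> 0 <= (p ^ j)%N%:Z * m j by move=> _; apply: mulr_ge0.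
have := psumr_eq0P hnn h0 (i := i) isT; nia.
Qed.

End Digits.

Lemma Omega0_digits_eq0 (p n : nat) (u : 'I_n -> int) : (2 <= p)%N ->
  (forall i, - (p%:Z - 1) <= u i <= p%:Z - 1) -> Omega0 p u = 0 -> u =1 (fun=> 0).
Proof.
move=> hp; elim: n u => [|n IH] u hu hs i; first by case: i.
move: hs; rewrite /Omega0 big_ord_recl /= expn0 mul1r.
have -> : \sum_(i < n) (p ^ (lift ord0 i))%N%:Z * u (lift ord0 i)
   = p%:Z * Omega0 p (fun i => u (lift ord0 i)).
  by rewrite -Omega0Z /Omega0; apply: eq_bigr => j _; rewrite lift0 expnS PoszM -mulrA mulrCA.
move=> hs.
have hS : Omega0 p (fun i => u (lift ord0 i)) = 0 by move: (hu ord0) hs; nia.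
have hu0 : u ord0 = 0 by move: hs; rewrite hS mulr0 addr0.
have IH' := IH _ (fun j => hu _) hS.
by case: (unliftP ord0 i) => [j ->|->] //; apply: IH'.
Qed.

Lemma pf1_dvd_Omega0_digits (p f : nat) (u : 'I_f -> int) : (2 <= p)%N -> (0 < f)%N ->
  (forall i, - (p%:Z - 1) <= u i <= p%:Z - 1) -> (pf1 p f %| Omega0 p u)%Z ->
  u =1 (fun=> 0) \/ u =1 (fun=> p%:Z - 1) \/ u =1 (fun=> - (p%:Z - 1)).
Proof.
move=> hp hf hu /dvdzP [q hq].
have hN : 0 < pf1 p f.
  have : (p ^ 0 < p ^ f)%N by rewrite ltn_exp2l.
  rewrite /pf1 expn0; lia.
have hpos i : 0 <= (p ^ i)%N%:Z by [].
have hub : Omega0 p u <= pf1 p f.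
  rewrite -Omega0_max_digit; apply: ler_sum => i _; apply: ler_wpM2l => //.
  by case/andP: (hu i).
have hlb : - pf1 p f <= Omega0 p u.
  rewrite -Omega0_max_digit -sumrN; apply: ler_sum => i _; rewrite -mulrN.
  by apply: ler_wpM2l => //; case/andP: (hu i).
have : q = 0 \/ q = 1 \/ q = -1 by nia.
case=> [q0|[q1|q1]].
- by left; apply: (Omega0_digits_eq0 hp hu); rewrite hq q0 mul0r.
- right; left => i.
  have h0 : Omega0 p (fun j => p%:Z - 1 - u j) = 0.
    by rewrite Omega0B Omega0_max_digit hq q1 mul1r subrr.
  have hv j : 0 <= p%:Z - 1 - u j by case/andP: (hu j) => *; lia.
  have := Omega0_ge0_eq0 (ltnW hp) hv h0 i; lia.
- right; right => i.
  have h0 : Omega0 p (fun j => u j - -1 * (p%:Z - 1)) = 0.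
    by rewrite Omega0B Omega0Z Omega0_max_digit hq q1; ring.
  have hv j : 0 <= u j - -1 * (p%:Z - 1) by case/andP: (hu j) => *; lia.
  have := Omega0_ge0_eq0 (ltnW hp) hv h0 i; lia.
Qed.

Section Rotation.

Variable f : nat.
Implicit Types (t u : 'I_f) (J : {set 'I_f}).

Lemma phi_shift_val (j : nat) t : val (phi_shift j t) = ((t + j) %% f)%N.
Proof.
elim: j => [|j IH]; first by rewrite addn0 modn_small.
rewrite /phi_shift iterS /= -/(phi_shift j t) IH.
by rewrite -[(((t + j) %% f).+1)%N]addn1 modnDml addn1 addnS.
Qed.

Lemma phi_shiftS (j : nat) t : phi_shift j.+1 t = ordS (phi_shift j t).
Proof. by []. Qed.

Lemma phi_shift_inj t i j : (i < f)%N -> (j < f)%N -> phi_shift i t = phi_shift j t -> i = j.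
Proof.
move=> hi hj /(congr1 val); rewrite !phi_shift_val => /eqP.
by rewrite eqn_modDl !modn_small // => /eqP.
Qed.

Lemma phi_shift_neq t i j : (i < f)%N -> (j < f)%N -> i <> j -> phi_shift i t != phi_shift j t.
Proof. by move=> hi hj hij; apply/eqP => /(phi_shift_inj hi hj). Qed.

Lemma phi_shift_surj t0 t : exists2 j, (j < f)%N & phi_shift j t0 = t.
Proof.
exists ((t + f - t0) %% f)%N; first by rewrite ltn_mod; case: f t0 {t} => [[]|].
apply: val_inj; rewrite phi_shift_val /= modnDmr.
have -> : (t0 + (t + f - t0) = t + f)%N by have := ltn_ord t0; lia.
by rewrite modnDr modn_small.
Qed.

Lemma phi_shift_period t : phi_shift f t = t.
Proof. by apply: val_inj; rewrite phi_shift_val modnDr modn_small. Qed.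

Lemma ord_pred_eq u t : (ord_pred u == t) = (u == ordS t).
Proof. by apply/eqP/eqP => [<-|->]; rewrite ?ord_predK ?ordSK. Qed.

Lemma Omega0_Omega (p : nat) (m : 'I_f -> int) t : val t = 0%N -> Omega0 p m = Omega p m t.
Proof.
move=> t0; apply: eq_bigr => i _; congr (_ * m _); apply: val_inj.
by rewrite phi_shift_val t0 add0n modn_small.
Qed.

Lemma Omega_ext (p : nat) (m1 m2 : 'I_f -> int) t : m1 =1 m2 -> Omega p m1 t = Omega p m2 t.
Proof. by move=> h; apply: eq_bigr => i _; rewrite h. Qed.

Lemma Omega_indicator (p : nat) u t j : (j < f)%N -> phi_shift j u = t ->
  Omega p (fun v => (v == t)%:Z) u = (p ^ j)%N%:Z.
Proof.
move=> hj hjt; rewrite /Omega (bigD1 (Ordinal hj)) //= hjt eqxx mulr1 big1 ?addr0 //.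
move=> i hi; case: eqP => [hit|]; last by rewrite mulr0.
have /= hij := phi_shift_inj (ltn_ord i) hj (etrans hit (esym hjt)).
by case/eqP: hi; apply: val_inj.
Qed.

Lemma Omega_carry (p : nat) u t :
  Omega p (fun v => p%:Z * (v == t)%:Z - (v == ordS t)%:Z) u \in [:: 0; pf1 p f].
Proof.
have -> : Omega p (fun v => p%:Z * (v == t)%:Z - (v == ordS t)%:Z) u =
    p%:Z * Omega p (fun v => (v == t)%:Z) u - Omega p (fun v => (v == ordS t)%:Z) u.
  by rewrite /Omega mulr_sumr -sumrB; apply: eq_bigr => i _; ring.
have [j hj hjt] := phi_shift_surj u t.
rewrite (Omega_indicator p hj hjt) -PoszM -expnS.
case: (ltnP j.+1 f) => hj1.
  by rewrite (@Omega_indicator p u (ordS t) j.+1) ?phi_shiftS ?hjt // subrr inE eqxx.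
have hjf : j.+1 = f by lia.
rewrite (@Omega_indicator p u (ordS t) 0) ?(leq_ltn_trans (leq0n j) hj) //; last first.
  by rewrite -hjt -phi_shiftS hjf phi_shift_period.
by rewrite hjf expn0 !inE eqxx orbT.
Qed.

Lemma Omega_const (p : nat) (v : int) t : Omega p (fun=> v) t = v * Omega0 p (fun _ : 'I_f => 1).
Proof. by rewrite /Omega /Omega0 mulr_sumr; apply: eq_bigr => i _; rewrite mulr1 mulrC. Qed.

Lemma setT_neq_exists_notin J : J != setT -> exists t, t \notin J.
Proof. by rewrite -properT => /properP[_ [t _ ht]]; exists t. Qed.

Lemma exists_boundary J : J != set0 -> J != setT -> exists t, t \notin J /\ ordS t \in J.
Proof.
move=> h0 hT; have [w hw] := setT_neq_exists_notin hT.
suff /existsP[t /andP[]] : [exists t, (t \notin J) && (ordS t \in J)] by exists t.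
apply: contraR h0; rewrite negb_exists => /forallP hall.
have hit j : phi_shift j w \notin J.
  elim: j => [//|j IH]; rewrite phi_shiftS; have := hall (phi_shift j w).
  by rewrite negb_and IH /= => ->.
apply/eqP/setP => u; rewrite inE; have [j _ <-] := phi_shift_surj w u.
exact/negbTE/hit.
Qed.

End Rotation.

Definition eps (f : nat) (J : {set 'I_f}) (t : 'I_f) : int := if t \in J then 1 else -1.

Definition solves_congr (p f : nat) (J : {set 'I_f}) (c Y : 'I_f -> int) : Prop :=
  (pf1 p f %| Omega0 p (fun t => eps J t * Y t - c t))%Z.

Definition antipodal (p f : nat) (J : {set 'I_f}) (Y Y' : 'I_f -> int) : Prop :=
  forall t, if t \in J then Y t = p%:Z /\ Y' t = 1 else Y t = 1 /\ Y' t = p%:Z.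

Section Congruence.

Variables (p f : nat) (J : {set 'I_f}) (c : 'I_f -> int).

Lemma solves_congr_ext (Y Y' : 'I_f -> int) :
  Y =1 Y' -> solves_congr p J c Y -> solves_congr p J c Y'.
Proof.
move=> hY; rewrite /solves_congr (Omega0_ext _ (m2 := fun t => eps J t * Y' t - c t)) //.
by move=> t; rewrite hY.
Qed.

Lemma solves_congr_y0 : solves_congr p J c (y0 p J c).
Proof.
pose m u : int := (u \notin J)%:Z.
have key t : eps J t * y0 p J c t - c t = m (ord_pred t) - p%:Z * m t.
  by rewrite /eps /y0 /m; case: (t \in J); case: (ord_pred t \in J) => /=; ring.
rewrite /solves_congr (Omega0_ext _ key) Omega0B Omega0Z; exact: Omega0_pred_rot.
Qed.

Lemma solves_congr_deltaJ (Y : 'I_f -> int) t : solves_congr p J c Y ->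
  (Y t <= 0 -> t \notin J) -> (p%:Z < Y t -> t \in J) -> solves_congr p J c (deltaJ p J Y t).
Proof.
move=> hY hle hgt.
pose old u := eps J u * Y u - c u; pose new u := eps J u * deltaJ p J Y t u - c u.
have key u : new u - old u =
    if 1 <= Y t <= p%:Z then 0 else (ord_pred u == t)%:Z - p%:Z * (u == t)%:Z.
  rewrite /new /old ord_pred_eq /deltaJ; case: ifP => hr; first ring.
  have hs : (if Y t <= 0 then p%:Z else - p%:Z) = - eps J t * p%:Z.
    rewrite /eps; case: (lerP (Y t) 0) => hy; first by rewrite (negbTE (hle hy)); ring.
    by rewrite hgt; [ring | move/negbT: hr; rewrite negb_and -!ltNge => /orP[] ?; lia].
  rewrite hs /eps; case: (eqVneq u t) => [->|_].
    case: (eqVneq t (ordS t)) => [e|_]; last by case: (t \in J) => /=; ring.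
    by rewrite -e; case: (t \in J) => /=; ring.
  by case: (eqVneq u (ordS t)) => [->|_] /=; [case: (ordS t \in J) => /=|]; ring.
rewrite /solves_congr -(subrK (Omega0 p old) (Omega0 p new)) -Omega0B.
apply: rpredD => //; rewrite (Omega0_ext _ key).
case: (1 <= Y t <= p%:Z); first by rewrite /Omega0 big1 ?dvdz0 // => i _; rewrite mulr0.
by rewrite Omega0B Omega0Z; exact: Omega0_pred_rot.
Qed.

Lemma solves_congr_cases (Y Y' : 'I_f -> int) : (2 <= p)%N -> (0 < f)%N ->
  (forall t, 1 <= Y t <= p%:Z) -> (forall t, 1 <= Y' t <= p%:Z) ->
  solves_congr p J c Y -> solves_congr p J c Y' ->
  Y =1 Y' \/ antipodal p J Y Y' \/ antipodal p J Y' Y.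
Proof.
move=> hp hf hY hY' hC hC'.
have hd : (pf1 p f %| Omega0 p (fun t => eps J t * (Y t - Y' t)))%Z.
  rewrite (Omega0_ext _ (m2 := fun t => (eps J t * Y t - c t) - (eps J t * Y' t - c t))).
    by rewrite Omega0B; exact: rpredB.
  by move=> t; ring.
have hb t : - (p%:Z - 1) <= eps J t * (Y t - Y' t) <= p%:Z - 1.
  by move: (hY t) (hY' t); rewrite /eps; case: (t \in J) => /andP[? ?] /andP[? ?]; lia.
case: (pf1_dvd_Omega0_digits hp hf hb hd) => [h|[h|h]].
- by left => t; move: (h t); rewrite /eps; case: (t \in J) => /= ?; lia.
- by right; left => t; move: (hY t) (hY' t) (h t); rewrite /eps;
    case: (t \in J) => /andP[? ?] /andP[? ?] /= ?; split; lia.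
- by right; right => t; move: (hY t) (hY' t) (h t); rewrite /eps;
    case: (t \in J) => /andP[? ?] /andP[? ?] /= ?; split; lia.
Qed.

End Congruence.

Section Greedy.

Variables (p f : nat) (J : {set 'I_f}) (c : 'I_f -> int) (t0 : 'I_f).

Lemma deltaJ_other (Y : 'I_f -> int) t u : u != t -> u != ordS t -> deltaJ p J Y t u = Y u.
Proof. by move=> h1 h2; rewrite /deltaJ (negbTE h1) (negbTE h2); case: ifP => // _; ring. Qed.

Lemma deltaJ_at (Y : 'I_f -> int) t : ordS t != t ->
  deltaJ p J Y t t = if 1 <= Y t <= p%:Z then Y t else Y t + (if Y t <= 0 then p%:Z else - p%:Z).
Proof. by move=> h; rewrite /deltaJ eqxx eq_sym (negbTE h); case: ifP => // _; ring. Qed.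

Lemma deltaJ_next (Y : 'I_f -> int) t : ordS t != t ->
  deltaJ p J Y t (ordS t) = if 1 <= Y t <= p%:Z then Y (ordS t) else Y (ordS t) + eps J (ordS t).
Proof. by move=> h; rewrite /deltaJ eqxx (negbTE h); case: ifP => // _; rewrite /eps; ring. Qed.

(* The value range a coordinate can reach just before the carry step at it. *)
Definition near_range (t : 'I_f) (v : int) : bool :=
  if t \in J then 1 <= v <= p%:Z + 1 else -1 <= v <= p%:Z - 1.

Lemma solves_congr_deltaJ_near (Y : 'I_f -> int) t :
  solves_congr p J c Y -> near_range t (Y t) -> solves_congr p J c (deltaJ p J Y t).
Proof.
move=> hY; rewrite /near_range => hn; apply: solves_congr_deltaJ => // hy;
  by move: hn; case: (t \in J) => // /andP[? ?]; lia.
Qed.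

Lemma near_range_carry t v : (2 <= p)%N -> near_range t v ->
  1 <= (if 1 <= v <= p%:Z then v else v + (if v <= 0 then p%:Z else - p%:Z)) <= p%:Z.
Proof.
move=> hp; rewrite /near_range; case: (t \in J) => /andP[? ?]; case: ifP => // /negbT;
  by rewrite negb_and -!ltNge => /orP[] ?; case: ifP => ?; apply/andP; split; lia.
Qed.

Hypothesis hc : forall t, 1 <= c t <= p%:Z - 1.

Lemma y0_bounds t :
  if t \in J then 1 <= y0 p J c t <= p%:Z else 0 <= y0 p J c t <= p%:Z - 1.
Proof.
by have := hc t; rewrite /y0; case: (t \in J); case: (ord_pred t \in J) => /andP[? ?];
  apply/andP; split; lia.
Qed.

Lemma y0_eq0 t : y0 p J c t = 0 -> [/\ t \notin J, ord_pred t \notin J & c t = p%:Z - 1].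
Proof.
by have := hc t; rewrite /y0; case: (t \in J); case: (ord_pred t \in J) => /andP[? ?] ?;
  split => //; lia.
Qed.

Hypothesis hp : (2 <= p)%N.

(* After k carry steps (1 <= k <= f), writing t_j := phi_shift j t0: the
   t_j with j > k are untouched, those with 0 < j < k are final, t_k awaits
   its carry, and t_0 holds p until the last step wraps around onto it. *)
Definition greedy_inv (k : nat) : Prop :=
  let Y := ysteps p J c t0 k in
  [/\ solves_congr p J c Y,
      forall j, (k < j < f)%N -> Y (phi_shift j t0) = y0 p J c (phi_shift j t0),
      forall j, (0 < j < k)%N -> 1 <= Y (phi_shift j t0) <= p%:Z,
      (k < f)%N -> near_range (phi_shift k t0) (Y (phi_shift k t0)) /\ Y t0 = p%:Z &
      k = f -> [/\ 1 <= Y t0 <= p%:Z, p%:Z - 1 <= Y t0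
                  & Y (ord_pred t0) = p%:Z -> Y t0 = p%:Z - 1]].

Hypothesis h0 : y0 p J c t0 = 0.

Lemma greedy_inv1 : (0 < f)%N -> greedy_inv 1.
Proof.
move=> hf; have [nJ npJ ct0] := y0_eq0 h0.
have hn0 : near_range t0 (y0 p J c t0) by rewrite /near_range (negbTE nJ) h0; lia.
have hC := solves_congr_deltaJ_near (solves_congr_y0 p J c) hn0.
have hr0 : (1 <= y0 p J c t0 <= p%:Z) = false by rewrite h0.
rewrite /greedy_inv /=; have [hf1|hf1] : 1%N = f \/ (1 < f)%N by lia.
- have all_eq (u v : 'I_f) : u = v.
    by apply: val_inj; case: u v => [[|u] hu] [[|v] hv] //=; lia.
  have v0 : deltaJ p J (y0 p J c) t0 t0 = p%:Z - 1.
    rewrite /deltaJ hr0 h0 (all_eq (ordS t0) t0) eqxx (negbTE nJ) lexx; ring.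
  split=> [//|j|j|?|_]; try lia.
  by rewrite (all_eq (ord_pred t0) t0) v0; split; [apply/andP; split|..]; lia.
- have hS : ordS t0 != t0 by apply: (@phi_shift_neq _ t0 1 0 hf1 hf).
  split=> [//|j /andP[hj1 hj2]|j|_|?]; try lia.
  + rewrite deltaJ_other //; first by apply: (@phi_shift_neq _ t0 j 0) => //; lia.
    by apply: (@phi_shift_neq _ t0 j 1) => //; lia.
  + split; last by rewrite deltaJ_at // hr0 h0; ring.
    rewrite deltaJ_next // hr0; have := y0_bounds (ordS t0); rewrite /near_range /eps.
    by case: (ordS t0 \in J) => /andP[? ?]; apply/andP; split; lia.
Qed.

Lemma greedy_invS k : (0 < k)%N -> (k < f)%N -> greedy_inv k -> greedy_inv k.+1.
Proof.
move=> hk0 hkf; have [nJ npJ _] := y0_eq0 h0.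
rewrite /greedy_inv /= -/(ysteps p J c t0 k); set Y := ysteps p J c t0 k.
set t := phi_shift k t0; case=> hC hU hR /(_ hkf) [hn hY0] _; clearbody Y.
have hC' := solves_congr_deltaJ_near hC hn.
have [hk1|hk1] : (k.+1 < f)%N \/ k.+1 = f by lia.
- have hS : ordS t = phi_shift k.+1 t0 by [].
  have hSt : ordS t != t by rewrite hS; apply: phi_shift_neq; lia.
  have hfix : 1 <= deltaJ p J Y t t <= p%:Z by rewrite deltaJ_at //; exact: near_range_carry hp hn.
  split=> [//|j /andP[hj1 hj2]|j /andP[hj1 hj2]|_|?]; try lia.
  + rewrite deltaJ_other; [by apply: hU; lia | by apply: phi_shift_neq; lia |].
    by rewrite hS; apply: phi_shift_neq; lia.
  + case: (ltngtP j k) => [hjk|//|->//]; last by lia.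
    rewrite deltaJ_other; [by apply: hR; lia | by apply: phi_shift_neq; lia |].
    by rewrite hS; apply: phi_shift_neq; lia.
  + split.
      rewrite deltaJ_next // hS hU; last by rewrite ltnSn.
      have := y0_bounds (phi_shift k.+1 t0).
      by rewrite /near_range /eps; case: (_ \in J) => /andP[? ?]; case: ifP => _;
        apply/andP; split; lia.
    rewrite deltaJ_other //; first by apply: (@phi_shift_neq _ t0 0 k) => //; lia.
    by rewrite hS; apply: (@phi_shift_neq _ t0 0 k.+1) => //; lia.
- have hS : ordS t = t0 by rewrite -phi_shiftS hk1 phi_shift_period.
  have hP : ord_pred t0 = t by rewrite -hS ordSK.
  have hSt : ordS t != t by rewrite hS eq_sym; apply: (@phi_shift_neq _ t0 k 0) => //; lia.
  have hfix : 1 <= deltaJ p J Y t t <= p%:Z by rewrite deltaJ_at //; exact: near_range_carry hp hn.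
  split=> [//|j|j /andP[hj1 hj2]|?|_]; try lia.
  + case: (ltngtP j k) => [hjk|//|->//]; last by lia.
    rewrite deltaJ_other; [by apply: hR; lia | by apply: phi_shift_neq; lia |].
    by rewrite hS; apply: (@phi_shift_neq _ t0 j 0) => //; lia.
  + have e0 : deltaJ p J Y t t0 = if 1 <= Y t <= p%:Z then p%:Z else p%:Z - 1.
      by rewrite -{1}hS deltaJ_next // hS hY0 /eps (negbTE nJ).
    move: hn; rewrite /near_range -hP (negbTE npJ) hP e0 deltaJ_at // => /andP[? ?].
    by case: ifP => /= ?; split => //; try (apply/andP; split); lia.
Qed.

Lemma ysteps_greedy : (0 < f)%N ->
  let Y := ysteps p J c t0 f in
  [/\ forall t, 1 <= Y t <= p%:Z, solves_congr p J c Y, p%:Z - 1 <= Y t0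
    & Y (ord_pred t0) = p%:Z -> Y t0 = p%:Z - 1].
Proof.
move=> hf; have hinv k : (0 < k <= f)%N -> greedy_inv k.
  elim: k => [//|k IH] /andP[_ hk]; case: (posnP k) => [->|hk0]; first exact: greedy_inv1.
  by apply: greedy_invS => //; apply: IH; rewrite hk0 ltnW.
have [hC _ hR _ /(_ erefl) [hr0 hge hlast]] : greedy_inv f by apply: hinv; rewrite hf leqnn.
split=> // t; have [j hj <-] := phi_shift_surj t0 t.
by case: (posnP j) => [->|hj0]; [exact: hr0 | apply: hR; rewrite hj0].
Qed.

End Greedy.

Section ReductionVector.

Variables (p f : nat) (c : 'I_f -> int).
Implicit Type J : {set 'I_f}.
Hypotheses (hc : forall t, 1 <= c t <= p%:Z - 1) (hp : (2 <= p)%N) (hf : (0 < f)%N).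

Lemma rJc_cases J t0 : t0_ok p J c t0 ->
  (forall t, 0 < y0 p J c t) /\ rJc p J c t0 =1 y0 p J c \/
  y0 p J c t0 = 0 /\ rJc p J c t0 =1 ysteps p J c t0 f.
Proof.
rewrite /rJc; case: (boolP [forall t, 0 < y0 p J c t]) => [/forallP hpos|hn] ho.
  by left.
right; split=> //; case: ho => // hpos; case/negP: hn; exact/forallP.
Qed.

Lemma rJc_range J t0 : t0_ok p J c t0 -> forall t, 1 <= rJc p J c t0 t <= p%:Z.
Proof.
move=> hok t; case: (rJc_cases hok) => [[hpos ->]|[h0 ->]].
  by have := y0_bounds J hc t; have := hpos t; case: (t \in J) => ? /andP[? ?]; lia.
by case: (ysteps_greedy hc hp h0 hf).
Qed.

Lemma rJc_solves_congr J t0 : t0_ok p J c t0 -> solves_congr p J c (rJc p J c t0).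
Proof.
case/rJc_cases=> [[_ hr]|[h0 hr]]; apply: solves_congr_ext (fun t => esym (hr t)) _.
  exact: solves_congr_y0.
by case: (ysteps_greedy hc hp h0 hf).
Qed.

Lemma rJc_setT t0 : rJc p setT c t0 =1 c.
Proof.
have hy : y0 p setT c =1 c by move=> t; rewrite /y0 !inE.
have hpos : [forall t, 0 < y0 p setT c t] by apply/forallP => t; rewrite hy; case/andP: (hc t).
by move=> t; rewrite /rJc hpos hy.
Qed.

Lemma antipodal_rJc_setT J (Y : 'I_f -> int) t0 :
  t0_ok p J c t0 -> antipodal p J Y (rJc p J c t0) -> J = setT.
Proof.
move=> hok hanti; apply/eqP; apply: contraT => /setT_neq_exists_notin [t ht].
have hp_out u : u \notin J -> rJc p J c t0 u = p%:Z.
  by move=> hu; have := hanti u; rewrite (negbTE hu) => -[].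
case/rJc_cases: hok => [[hpos hr]|[h0 hr]].
  have := y0_bounds J hc t; rewrite (negbTE ht) -hr hp_out //; lia.
have [nJ npJ _] := y0_eq0 hc h0; have [_ _ _ hlast] := ysteps_greedy hc hp h0 hf.
by have := hlast (etrans (esym (hr _)) (hp_out _ npJ)); rewrite -hr hp_out //; lia.
Qed.

Lemma rJc_indep J t0 t0' : y0 p J c t0 = 0 -> y0 p J c t0' = 0 ->
  rJc p J c t0 =1 rJc p J c t0'.
Proof.
move=> h0 h0'; have [nJ _ _] := y0_eq0 hc h0.
have hok : t0_ok p J c t0 by right. have hok' : t0_ok p J c t0' by right.
have hT : J != setT by apply: contraNneq nJ => ->; rewrite inE.
case: (solves_congr_cases hp hf (rJc_range hok) (rJc_range hok') (rJc_solves_congr hok)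
  (rJc_solves_congr hok')) => [//|[]] /antipodal_rJc_setT => [/(_ hok')|/(_ hok)] hJ;
  by rewrite hJ eqxx in hT.
Qed.

Lemma rJc_set0_one t0 : t0_ok p set0 c t0 -> rJc p set0 c t0 =1 (fun=> 1) ->
  (forall t, c t = p%:Z - 2) \/ p = 2%N.
Proof.
move=> hok hr1; case/rJc_cases: hok => [[_ hr]|[h0 hr]].
  by left => t; have := hr1 t; rewrite hr /y0 !inE; lia.
by right; have [_ _ hge _] := ysteps_greedy hc hp h0 hf; move: hge; rewrite -hr hr1; lia.
Qed.

Lemma antipodal_rJc J (Y : 'I_f -> int) t0 :
  t0_ok p J c t0 -> antipodal p J Y (rJc p J c t0) ->
  [/\ J = setT, c =1 (fun=> 1) & Y =1 (fun=> p%:Z)].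
Proof.
move=> hok hanti; have hJ := antipodal_rJc_setT hok hanti; subst J.
by split=> // t; have := hanti t; rewrite inE rJc_setT => -[].
Qed.

End ReductionVector.

Lemma finField_expf_card_sub1 (k : finFieldType) (z : k) : z != 0 -> z ^+ #|k|.-1 = 1.
Proof.
have hk : #|k| = #|k|.-1.+1 by rewrite prednK //; apply/card_gt0P; exists 0.
by move=> hz; apply: (mulfI hz); rewrite -exprS -hk expf_card mulr1.
Qed.

Lemma finField_unit_generator (k : finFieldType) :
  exists2 z : k, z != 0 & forall m : int, z ^ m = 1 -> (#|k|.-1%:Z %| m)%Z.
Proof.
set n := #|k|.-1.
have hn : (0 < n)%N.
  by rewrite /n -(cardC1 (0 : k)); apply/card_gt0P; exists 1; rewrite !inE oner_neq0.
have hroot (x : k) : x \in enum (predC1 0) -> n.-unity_root x.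
  by rewrite mem_enum !inE unity_rootE => /finField_expf_card_sub1 ->.
have hsz : (n <= size (enum (predC1 (0%R : k))))%N by rewrite -cardE cardC1.
have /hasP[z] := has_prim_root hn (introT allP hroot) (enum_uniq _) hsz.
rewrite mem_enum !inE => hz hprim; exists z => // -[m|m] /= hm; rewrite dvdzE /=.
  by rewrite (prim_order_dvd hprim); apply/eqP.
by rewrite (prim_order_dvd hprim) -invr_eq1; apply/eqP.
Qed.

Lemma finField_expz_card_sub1 (k : finFieldType) (z : k) (m : int) :
  z != 0 -> (#|k|.-1%:Z %| m)%Z -> z ^ m = 1.
Proof.
move=> hz /dvdzP[q ->]; rewrite mulrC -exprz_exp (_ : z ^ #|k|.-1%:Z = z ^+ #|k|.-1) //.
by rewrite finField_expf_card_sub1 // exp1rz.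
Qed.

Lemma pf1_card (k : finFieldType) (p f : nat) : #|k| = (p ^ f)%N -> #|k|.-1%:Z = pf1 p f.
Proof.
move=> hk; have : (0 < #|k|)%N by apply/card_gt0P; exists 0.
by rewrite /pf1 hk; lia.
Qed.

Section CharacterExponents.

Variables (k L : fieldType) (tau0 : {rmorphism k -> L}) (p f e : nat) (G : Type) (om : G -> k).

Lemma omprod_expz (A : {set 'I_f}) (m : 'I_f -> int) (g : G) : om g != 0 ->
  omprod tau0 p om A m g = tau0 (om g) ^ (\sum_(i in A) (p ^ i)%N%:Z * m i).
Proof.
move=> hg; have hw : tau0 (om g) \is a GRing.unit by rewrite unitfE fmorph_eq0.
rewrite (big_morph (fun z => tau0 (om g) ^ z) (exprzDr hw) (expr0z _)).
by apply: eq_bigr => i _; rewrite /omega_tau rmorphXn -exprz_exp.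
Qed.

Lemma big_setC_if (F1 F2 : 'I_f -> int) (A : {set 'I_f}) :
  \sum_(i in A) F1 i + \sum_(i in ~: A) F2 i = \sum_i (if i \in A then F1 i else F2 i).
Proof.
rewrite [RHS](bigID (mem A)) /=; congr (_ + _); apply: eq_big => // i; rewrite ?inE //.
  by move=> ->.
by move/negbTE ->.
Qed.

Variables (a b : 'I_f -> int) (J : {set 'I_f}) (x : 'I_f -> int).

Lemma ch1_expz g : om g != 0 ->
  ch1 tau0 p om a b J x g = tau0 (om g) ^ Omega0 p (fun i => sJx a b J x i + b i).
Proof.
move=> hg; have hw : tau0 (om g) \is a GRing.unit by rewrite unitfE fmorph_eq0.
rewrite /ch1 !omprod_expz // -exprzDr // big_setC_if; congr (_ ^ _).
by apply: eq_bigr => i _; rewrite /sJx; case: (i \in J); congr (_ * _); ring.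
Qed.

Lemma ch2_expz g : om g != 0 ->
  ch2 tau0 p e om a b J x g = tau0 (om g) ^ Omega0 p (fun i => a i + e%:Z - sJx a b J x i).
Proof.
move=> hg; have hw : tau0 (om g) \is a GRing.unit by rewrite unitfE fmorph_eq0.
rewrite /ch2 !omprod_expz // mulrC -exprzDr // big_setC_if; congr (_ ^ _).
by apply: eq_bigr => i _; rewrite /sJx; case: (i \in J); congr (_ * _); ring.
Qed.

End CharacterExponents.

Section MaximalElement.

Variables (k : finFieldType) (L : fieldType) (tau0 : {rmorphism k -> L}) (p f e : nat).
Variables (G : Type) (I : G -> Prop) (om : G -> k) (chi1 chi2 : G -> L) (a b : 'I_f -> int).
Hypotheses (hk : #|k| = (p ^ f)%N) (hom : forall g, om g != 0).

Let inS := in_S tau0 p e I om chi1 chi2 a b.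

Lemma tau0_expz_pf1 g (m : int) : (pf1 p f %| m)%Z -> tau0 (om g) ^ m = 1.
Proof.
by move=> hm; rewrite -fmorphXz finField_expz_card_sub1 ?rmorph1 ?(pf1_card hk).
Qed.

Lemma in_S_change_J (J J' : {set 'I_f}) (x : 'I_f -> int) : inS J x ->
  (pf1 p f %| Omega0 p (fun i => sJx a b J' x i - sJx a b J x i))%Z -> inS J' x.
Proof.
move=> [hx [h1 h2]] hd; set d := Omega0 p _ in hd.
have hu g : tau0 (om g) \is a GRing.unit by rewrite unitfE fmorph_eq0.
split=> //; split=> g hg.
- rewrite h1 // !ch1_expz //.
  have -> : Omega0 p (fun i => sJx a b J' x i + b i) = Omega0 p (fun i => sJx a b J x i + b i) + d.
    by apply/eqP; rewrite addrC -subr_eq -Omega0B; apply/eqP/Omega0_ext => i; ring.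
  by rewrite exprzDr // (tau0_expz_pf1 _ hd) mulr1.
- rewrite h2 // !ch2_expz //.
  have -> : Omega0 p (fun i => a i + e%:Z - sJx a b J' x i) =
      Omega0 p (fun i => a i + e%:Z - sJx a b J x i) + - d.
    apply/eqP; rewrite addrC -subr_eq -Omega0B /d -mulN1r -Omega0Z.
    by apply/eqP/Omega0_ext => i; ring.
  have hd' : (pf1 p f %| - d)%Z by rewrite rpredN.
  by rewrite exprzDr // (tau0_expz_pf1 _ hd') mulr1.
Qed.

Lemma pf1_natE : (p ^ f - 1)%N%:Z = pf1 p f.
Proof.
have : (0 < p ^ f)%N by rewrite -hk; apply/card_gt0P; exists 0.
by rewrite /pf1; lia.
Qed.

Lemma maxS_leS_eq (J J' : {set 'I_f}) (x : 'I_f -> int) : (0 < f)%N ->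
  maxS inS (leS p a b) J x -> leS p a b J x J' x -> J' = J.
Proof.
move=> hf [hJ hmax] hle; apply: (proj1 (hmax J' x _ hle)); apply: in_S_change_J hJ _.
by have [_] := hle (Ordinal hf); rewrite -Omega0_Omega // pf1_natE.
Qed.

Lemma weight_solves_congr (psi : G -> L) (n : 'I_f -> int) (J : {set 'I_f}) (x : 'I_f -> int) :
  (forall u : k, u != 0 -> exists2 g, I g & om g = u) -> (forall g, I g -> psi g = 1) ->
  (forall g, chi1 g / chi2 g = psi g * omprod tau0 p om setT n g) -> inS J x ->
  solves_congr p J (fun t => n t + e%:Z - 1 - 2 * x t) (fun t => a t - b t + 1).
Proof.
move=> hsurj hpsi hchi [_ [h1 h2]].
have [z hz hzord] := finField_unit_generator k; have [g hg hgz] := hsurj z hz.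
have hu : tau0 (om g) \is a GRing.unit by rewrite unitfE fmorph_eq0.
have := hchi g; rewrite hpsi // mul1r h1 // h2 // ch1_expz // ch2_expz // omprod_expz //.
rewrite invr_expz -exprzDr // => /(congr1 (fun w => w / tau0 (om g) ^ Omega0 p n)).
rewrite (eq_bigl predT) => [|i]; last by rewrite inE.
rewrite divff ?expfz_neq0 ?fmorph_eq0 // invr_expz -exprzDr // hgz -fmorphXz -(rmorph1 tau0).
move/fmorph_inj/hzord; rewrite (pf1_card hk) /solves_congr -!Omega0B.
by congr (_ %| _)%Z; apply: Omega0_ext => i; rewrite /eps /sJx; case: (i \in J); ring.
Qed.

Lemma maxS_no_carry (J : {set 'I_f}) (x : 'I_f -> int) t : (0 < f)%N ->
  maxS inS (leS p a b) J x -> t \notin J -> ordS t \in J ->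
  a t - b t + 1 = p%:Z -> a (ordS t) - b (ordS t) + 1 = 1 -> False.
Proof.
move=> hf hmax ht hSt hDt hDS; have hne : ordS t != t by apply: contraNneq ht => <-.
pose J' := (t |: J) :\ ordS t.
have hd u : sJx a b J' x u - sJx a b J x u = p%:Z * (u == t)%:Z - (u == ordS t)%:Z.
  rewrite /sJx !inE; case: (eqVneq u t) => [->|hut].
    by rewrite (negbTE ht) eq_sym (negbTE hne) /=; lia.
  case: (eqVneq u (ordS t)) => [->|_] /=; first by rewrite hSt /=; lia.
  by rewrite subrr; ring.
have hle : leS p a b J x J' x.
  move=> u; rewrite (Omega_ext _ _ hd) pf1_natE.
  have hN : 0 <= pf1 p f by rewrite -pf1_natE.
  by case/predU1P: (Omega_carry p u t) => [->|/predU1P[->|//]]; rewrite ?dvdz0 ?dvdzz.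
have := maxS_leS_eq hf hmax hle => /setP/(_ t).
by rewrite !inE eqxx eq_sym (negbTE hne) (negbTE ht).
Qed.

Lemma maxS_set0_weight2 (x : 'I_f -> int) : (0 < f)%N -> p = 2%N ->
  maxS inS (leS p a b) set0 x -> (forall t, a t - b t + 1 = 2) -> False.
Proof.
move=> hf hp2 hmax hD.
have hle : leS p a b set0 x setT x.
  move=> u; rewrite (Omega_ext _ (m2 := fun=> 2)); last by move=> v; rewrite /sJx !inE hD; ring.
  rewrite Omega_const pf1_natE hp2 (Omega0_ext _ (m2 := fun=> 2%:Z - 1)) // Omega0_max_digit.
  have : 0 <= pf1 2 f by rewrite -hp2 -pf1_natE.
  by split; [lia | exact: dvdz_mull].
have := maxS_leS_eq hf hmax hle => /setP/(_ (Ordinal hf)).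
by rewrite !inE.
Qed.

Lemma antipodal_rJc_weight (c : 'I_f -> int) (J : {set 'I_f}) (x : 'I_f -> int) t0 :
  (forall t, 1 <= c t <= p%:Z - 1) -> (2 <= p)%N -> (0 < f)%N ->
  t0_ok p J c t0 -> maxS inS (leS p a b) J x ->
  antipodal p J (rJc p J c t0) (fun t => a t - b t + 1) ->
  [/\ J = set0, c =1 (fun=> p%:Z - 2) & forall t, a t - b t + 1 = p%:Z].
Proof.
move=> hc hp hf hok hmax hanti.
have hJT : J != setT.
  apply/eqP => hJT; have := hanti (Ordinal hf); rewrite hJT inE rJc_setT // => -[].
  by have := hc (Ordinal hf); lia.
have hJ0 : J = set0.
  apply/eqP; apply: contraT => hJ0; have [t [ht hSt]] := exists_boundary hJ0 hJT.
  have := hanti t; have := hanti (ordS t); rewrite (negbTE ht) hSt /= => -[_ hDS] [_ hDt].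
  by case: (maxS_no_carry hf hmax ht hSt hDt hDS).
subst J; have hr1 t : rJc p set0 c t0 t = 1 by have := hanti t; rewrite inE => -[].
have hDp t : a t - b t + 1 = p%:Z by have := hanti t; rewrite inE => -[].
case: (rJc_set0_one hc hp hf hok hr1) => [hc2|hp2]; first by split.
by exfalso; apply: (maxS_set0_weight2 hf hp2 hmax) => t; rewrite hDp hp2.
Qed.

End MaximalElement.

Theorem proposition5p7
  (p f e : nat) (k : finFieldType) (L : fieldType) (tau0 : {rmorphism k -> L})
  (G : Type) (mulG : G -> G -> G) (I : G -> Prop) (om : G -> k)
  (chi1 chi2 psi : G -> L) (n a b : 'I_f -> int)
  (J : {set 'I_f}) (x : 'I_f -> int) :
  prime p -> (0 < f)%N -> (0 < e)%N -> #|k| = (p ^ f)%N ->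
  (* omega : G_K -> k^x, a character, surjective on inertia *)
  (forall g, om g != 0) -> (forall g h, om (mulG g h) = om g * om h) ->
  (forall u : k, u != 0 -> exists2 g, I g & om g = u) ->
  is_char mulG chi1 -> is_char mulG chi2 -> is_char mulG psi ->
  (* chi = chi1 chi2^{-1} = psi prod_tau omega_tau^{n_tau}, psi unramified *)
  (forall g, I g -> psi g = 1) ->
  (forall t, 1 <= n t <= p%:Z) -> (exists t, n t < p%:Z) ->
  (forall g, chi1 g / chi2 g = psi g * omprod tau0 p om setT n g) ->
  (* weakly generic *)
  (forall t, e%:Z <= n t <= p%:Z - e%:Z) ->
  (* sigma_{a,b} a Serre weight in W^exp(chi1 (+) chi2) *)
  (forall t, 0 <= a t - b t <= p%:Z - 1) ->
  in_Wexp tau0 p e I om chi1 chi2 a b ->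
  (* (J, x) the unique maximal element of the (non-empty) S(chi1, chi2, sigma) *)
  unique_maxS (in_S tau0 p e I om chi1 chi2 a b) (leS p a b) J x ->
  let c := fun t => n t + e%:Z - 1 - 2 * x t in
  (forall t, 1 <= c t <= p%:Z - 1) /\
  (forall t0 t0', y0 p J c t0 = 0 -> y0 p J c t0' = 0 ->
     forall t, rJc p J c t0 t = rJc p J c t0' t) /\
  (forall t0, t0_ok p J c t0 ->
     let r := rJc p J c t0 in
     let exc := (J = setT /\ forall t, n t = e%:Z /\ x t = e%:Z - 1) \/
                (J = set0 /\ forall t, n t = p%:Z - 1 - e%:Z /\ x t = 0) in
     (exc -> (forall t, a t - b t + 1 = r t) \/ (forall t, a t - b t + 1 = p%:Z)) /\
     (~ exc -> forall t, a t - b t + 1 = r t)).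
Proof.
(* Only the character identity on inertia and the maximality of (J, x) matter. *)
move=> hpr hf _ hk hom _ hsurj _ _ _ hpsi _ _ hchi hgen hab _ [hmax _] c.
have hp := prime_gt1 hpr; have [hS _] := hmax; have [hx _] := hS.
have hc t : 1 <= c t <= p%:Z - 1 by have := hgen t; have := hx t; rewrite /c; lia.
split=> //; split=> [t0 t0' h0 h0'|t0 hok r exc]; first exact/(rJc_indep hc hp hf h0 h0').
have hw := weight_solves_congr hk hom hsurj hpsi hchi hS.
have hw_range t : 1 <= a t - b t + 1 <= p%:Z by have := hab t; lia.
suff [[hexc hwp]|hwr] :
    exc /\ (forall t, a t - b t + 1 = p%:Z) \/ (forall t, a t - b t + 1 = r t).
- by split=> [_|/(_ hexc)//]; right.
- by split=> [_|_]; [left|].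
case: (solves_congr_cases hp hf hw_range (rJc_range hc hp hf hok) hw
  (rJc_solves_congr hc hp hf hok)) => [|[]]; first by right.
- case/(antipodal_rJc hc hp hf hok) => hJ hc1 hwp; left; split=> //; left; split=> // t.
  by have := hc1 t; have := hgen t; have := hx t; rewrite /c; lia.
- case/(antipodal_rJc_weight hk hom hc hp hf hok hmax) => hJ hc2 hwp.
  left; split=> //; right; split=> // t.
  by have := hc2 t; have := hgen t; have := hx t; rewrite /c; lia.
Qed.
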